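(* For a polygonal knot $K$, $$MD(K) \geq \min\{2\,R(K),\,MinEdge(K)\}.$$
   Context: A polygonal knot $K$ with $n$ edges is given by distinct vertices $v_1,\dots,v_n\in\mathbb{R}^3$ (indices mod $n$), with edges $e_i=[v_i,v_{i+1}]$ meeting only at the common vertex of adjacent edges. $|e_i|$ is the length of $e_i$ and $MinEdge(K)=\min_i|e_i|$. $MD(K)$ is the minimum distance between non-adjacent edges of $K$. $angle(v_i)\in[0,\pi)$ is the turning angle at $v_i$ (angle between $v_i-v_{i-1}$ and $v_{i+1}-v_i$). Let $Rad(v_i)=\dfrac{\min\{|e_{i-1}|,|e_i|\}}{2\tan(angle(v_i)/2)}$ and $MinRad(K)=\min_i Rad(v_i)$. For $x\in K$ let $d_x(y)=\Vert x-y\Vert$ for $y\in K$. A point $y$ is a turning point for $x$ if, moving along the knot, $d_x$ changes from increasing to decreasing or from decreasing to increasing at $y$. Let $DC(K)$ be the set of pairs $(x,y)$, $x\neq y$, with $x$ a turning point of $d_y$ and $y$ a turning point of $d_x$, and $dcsd(K)=\min\{\Vert x-y\Vert:(x,y)\in DC(K)\}$. The polygonal thickness radius is $R(K)=\min\{MinRad(K),dcsd(K)/2\}$. *)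

From Stdlib Require Import Reals Lra Lia ZArith List.
From Coquelicot Require Import Coquelicot.
Open Scope R_scope.

Definition pt : Type := (R * R * R)%type.
Definition padd (a b : pt) : pt :=
  let '(a1, a2, a3) := a in let '(b1, b2, b3) := b in (a1 + b1, a2 + b2, a3 + b3).
Definition psub (a b : pt) : pt :=
  let '(a1, a2, a3) := a in let '(b1, b2, b3) := b in (a1 - b1, a2 - b2, a3 - b3).
Definition pscal (t : R) (a : pt) : pt :=
  let '(a1, a2, a3) := a in (t * a1, t * a2, t * a3).
Definition pdot (a b : pt) : R :=
  let '(a1, a2, a3) := a in let '(b1, b2, b3) := b in a1 * b1 + a2 * b2 + a3 * b3.
Definition pnorm (a : pt) : R := sqrt (pdot a a).
Definition pdist (a b : pt) : R := pnorm (psub a b).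

(** A polygon with n edges is given by v : nat -> pt; only v 0, ..., v (n-1)
    matter, indices are taken mod n. *)
Definition V (n : nat) (v : nat -> pt) (i : nat) : pt := v (i mod n)%nat.

Definition on_seg (a b p : pt) : Prop :=
  exists t, 0 <= t <= 1 /\ p = padd a (pscal t (psub b a)).

Definition on_edge (n : nat) (v : nat -> pt) (i : nat) (p : pt) : Prop :=
  on_seg (V n v i) (V n v (S i)) p.

Definition edge_len (n : nat) (v : nat -> pt) (i : nat) : R :=
  pdist (V n v (S i)) (V n v i).

Definition adjacent (n : nat) (i j : nat) : Prop :=
  j = (S i mod n)%nat \/ i = (S j mod n)%nat.

Definition polygonal_knot (n : nat) (v : nat -> pt) : Prop :=
  (3 <= n)%nat /\
  (forall i j, (i < n)%nat -> (j < n)%nat -> i <> j -> v i <> v j) /\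
  (forall i j p, (i < n)%nat -> (j < n)%nat -> i <> j ->
     on_edge n v i p -> on_edge n v j p ->
     (j = (S i mod n)%nat /\ p = V n v j) \/ (i = (S j mod n)%nat /\ p = V n v i)).

Fixpoint min_list (l : list R) (d : R) : R :=
  match l with nil => d | x :: nil => x | x :: l' => Rmin x (min_list l' d) end.
Definition MinEdge (n : nat) (v : nat -> pt) : R :=
  min_list (map (edge_len n v) (seq 0 n)) 0.

(** MD(K): the minimum distance between non-adjacent edges (+oo if there
    are no non-adjacent edges), taken as a greatest lower bound. *)
Definition MD (n : nat) (v : nat -> pt) : Rbar :=
  Glb_Rbar (fun d => exists i j p q, (i < n)%nat /\ (j < n)%nat /\ i <> j /\
              ~ adjacent n i j /\ on_edge n v i p /\ on_edge n v j q /\ d = pdist p q).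

(** Turning angle at v_i, in [0, pi]: angle between v_i - v_{i-1} and
    v_{i+1} - v_i. *)
Definition turn_angle (n : nat) (v : nat -> pt) (i : nat) : R :=
  let a := psub (V n v i) (V n v (i + n - 1)) in
  let b := psub (V n v (S i)) (V n v i) in
  acos (pdot a b / (pnorm a * pnorm b)).

(** Rad(v_i) = min(|e_{i-1}|,|e_i|) / (2 tan(angle(v_i)/2));
    = +oo when the angle is 0 (division by tan 0 = 0). *)
Definition Rad (n : nat) (v : nat -> pt) (i : nat) : Rbar :=
  if Req_EM_T (turn_angle n v i) 0 then p_infty
  else Finite (Rmin (edge_len n v (i + n - 1)) (edge_len n v i)
               / (2 * tan (turn_angle n v i / 2))).

Definition MinRad (n : nat) (v : nat -> pt) : Rbar :=
  fold_right (fun i m => Rbar_min (Rad n v i) m) p_infty (seq 0 n).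

(** Arc-length-like parametrisation of the knot by t in R, periodic of
    period n: gamma(t) = v_i + (t - k)(v_{i+1} - v_i) with k = floor t,
    i = k mod n. *)
Definition gamma (n : nat) (v : nat -> pt) (t : R) : pt :=
  let k := Int_part t in
  let i := Z.to_nat (k mod Z.of_nat n)%Z in
  padd (V n v i) (pscal (t - IZR k) (psub (V n v (S i)) (V n v i))).

Definition turning_param (n : nat) (v : nat -> pt) (x : pt) (t : R) : Prop :=
  let f := fun u => pdist x (gamma n v u) in
  exists eps, 0 < eps /\
   (((forall a b, t - eps <= a -> a < b -> b <= t -> f a < f b) /\
     (forall a b, t <= a -> a < b -> b <= t + eps -> f b < f a)) \/
    ((forall a b, t - eps <= a -> a < b -> b <= t -> f b < f a) /\
     (forall a b, t <= a -> a < b -> b <= t + eps -> f a < f b))).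

Definition turning_pt (n : nat) (v : nat -> pt) (x y : pt) : Prop :=
  exists t, y = gamma n v t /\ turning_param n v x t.

Definition dcsd (n : nat) (v : nat -> pt) : Rbar :=
  Glb_Rbar (fun d => exists x y, x <> y /\ turning_pt n v y x /\ turning_pt n v x y
                                 /\ d = pdist x y).

Definition ThickR (n : nat) (v : nat -> pt) : Rbar :=
  Rbar_min (MinRad n v) (Rbar_mult (/ 2) (dcsd n v)).

From Stdlib Require Import Reals Lra Lia Psatz ZArith List Classical.
From Coquelicot Require Import Coquelicot.
Open Scope R_scope.

(* Take a closest pair (x, y) of points on non-adjacent edges; it exists because there are
   finitely many pairs of edges.  Then x minimises the distance to y over all edges that are
   non-adjacent to the edge e_j of y.  If both edges through x are of this kind, x is a local
   minimum of d_y along K, hence a turning point of d_y, since along each edge the squared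
   distance to y is a strictly convex quadratic.  Otherwise x is the vertex v_(j-1) or v_(j+2);
   writing y - v_(j-1) = a + tau b with a, b the edge vectors at v_j, the estimate
   |a + tau b| >= min(min(|a|, |b|), 2 Rad(v_j)) gives |x - y| >= min(MinEdge, 2 MinRad), and
   similarly at v_(j+1).  If x and y are both turning points, (x, y) lies in DC(K), so
   |x - y| >= dcsd >= 2 R. *)

Ltac destruct_pt p :=
  let a := fresh "a" in let b := fresh "b" in let c := fresh "c" in destruct p as [[a b] c].

(** * Vectors and segments *)

Lemma pt_eq (a1 a2 a3 b1 b2 b3 : R) :
  a1 = b1 -> a2 = b2 -> a3 = b3 -> (a1, a2, a3) = (b1, b2, b3).
Proof. now intros -> -> ->. Qed.

Lemma pdot_comm a b : pdot a b = pdot b a.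
Proof. destruct_pt a; destruct_pt b; simpl; ring. Qed.

Lemma pdot_self_nonneg a : 0 <= pdot a a.
Proof. destruct_pt a; simpl; nra. Qed.

Lemma pdot_sub_self_pos a b : a <> b -> 0 < pdot (psub a b) (psub a b).
Proof.
  intro Hab. destruct a as [[a1 a2] a3]; destruct b as [[b1 b2] b3]; simpl.
  destruct (Rle_or_lt ((a1 - b1) * (a1 - b1) + (a2 - b2) * (a2 - b2) + (a3 - b3) * (a3 - b3)) 0)
    as [H|H]; [|exact H].
  pose proof (Rle_0_sqr (a1 - b1)); pose proof (Rle_0_sqr (a2 - b2));
  pose proof (Rle_0_sqr (a3 - b3)). unfold Rsqr in *.
  exfalso; apply Hab; apply pt_eq; apply Rminus_diag_uniq, Rsqr_0_uniq; unfold Rsqr; lra.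
Qed.

Lemma pnorm_nonneg a : 0 <= pnorm a.
Proof. apply sqrt_pos. Qed.

Lemma pnorm_sq a : pnorm a * pnorm a = pdot a a.
Proof. apply sqrt_sqrt, pdot_self_nonneg. Qed.

Lemma pdist_sym a b : pdist a b = pdist b a.
Proof. unfold pdist, pnorm; f_equal; destruct_pt a; destruct_pt b; simpl; ring. Qed.

(* Lagrange's identity: |u|^2 |w|^2 - (u.w)^2 is a sum of squares of 2x2 minors. *)
Lemma pdot_abs_le u w : Rabs (pdot u w) <= pnorm u * pnorm w.
Proof.
  unfold pnorm. rewrite <- sqrt_mult by apply pdot_self_nonneg.
  rewrite <- sqrt_Rsqr_abs. apply sqrt_le_1_alt.
  destruct u as [[u1 u2] u3]; destruct w as [[w1 w2] w3]; simpl. unfold Rsqr.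
  pose proof (Rle_0_sqr (u1 * w2 - u2 * w1)); pose proof (Rle_0_sqr (u1 * w3 - u3 * w1));
  pose proof (Rle_0_sqr (u2 * w3 - u3 * w2)). unfold Rsqr in *. nra.
Qed.

Lemma pnorm_triangle u w : pnorm (padd u w) <= pnorm u + pnorm w.
Proof.
  apply Rsqr_incr_0_var; [|pose proof (pnorm_nonneg u); pose proof (pnorm_nonneg w); lra].
  unfold Rsqr. rewrite pnorm_sq.
  replace ((pnorm u + pnorm w) * (pnorm u + pnorm w))
    with (pdot u u + 2 * (pnorm u * pnorm w) + pdot w w) by (rewrite <- !pnorm_sq; ring).
  pose proof (Rle_abs (pdot u w)); pose proof (pdot_abs_le u w).
  destruct_pt u; destruct_pt w; simpl in *; lra.
Qed.

Lemma pdist_triangle a b c : pdist a c <= pdist a b + pdist b c.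
Proof.
  unfold pdist. replace (psub a c) with (padd (psub a b) (psub b c)).
  - apply pnorm_triangle.
  - destruct_pt a; destruct_pt b; destruct_pt c; simpl; apply pt_eq; ring.
Qed.

Definition seg_pt (a b : pt) (s : R) : pt := padd a (pscal s (psub b a)).

Lemma seg_pt_0 a b : seg_pt a b 0 = a.
Proof. destruct_pt a; destruct_pt b; simpl; apply pt_eq; ring. Qed.

Lemma seg_pt_1 a b : seg_pt a b 1 = b.
Proof. destruct_pt a; destruct_pt b; simpl; apply pt_eq; ring. Qed.

Lemma pdist_seg_pt a b s s' :
  pdist (seg_pt a b s) (seg_pt a b s') = Rabs (s - s') * pdist b a.
Proof.
  unfold pdist, pnorm. rewrite <- sqrt_Rsqr_abs, <- sqrt_mult_alt by apply Rle_0_sqr.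
  f_equal. destruct_pt a; destruct_pt b; simpl. unfold Rsqr. ring.
Qed.

Lemma seg_dist_sq a b p s :
  pdot (psub p (seg_pt a b s)) (psub p (seg_pt a b s)) =
  pdot (psub p a) (psub p a) - 2 * s * pdot (psub p a) (psub b a)
  + s * s * pdot (psub b a) (psub b a).
Proof. destruct_pt a; destruct_pt b; destruct_pt p; simpl; ring. Qed.

Definition clamp01 (x : R) : R := Rmax 0 (Rmin 1 x).

Lemma clamp01_range x : 0 <= clamp01 x <= 1.
Proof. unfold clamp01, Rmax, Rmin; repeat destruct Rle_dec; lra. Qed.

Lemma clamp01_nearest x t : 0 <= t <= 1 -> Rabs (clamp01 x - x) <= Rabs (t - x).
Proof.
  intro Ht. unfold clamp01, Rmax, Rmin.
  repeat destruct Rle_dec; unfold Rabs; repeat destruct Rcase_abs; lra.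
Qed.

Definition seg_proj (a b p : pt) : R :=
  clamp01 (pdot (psub p a) (psub b a) / pdot (psub b a) (psub b a)).

(* The squared distance from p to seg_pt a b s is |b - a|^2 (s - s') ^ 2 + const, where s'
   is the parameter of the foot of the perpendicular; so clamping s' to [0,1] minimises it. *)
Lemma seg_proj_min a b p t : a <> b -> 0 <= t <= 1 ->
  pdist p (seg_pt a b (seg_proj a b p)) <= pdist p (seg_pt a b t).
Proof.
  intros Hab Ht. unfold pdist, pnorm. apply sqrt_le_1_alt. rewrite !seg_dist_sq.
  pose proof (pdot_sub_self_pos b a (not_eq_sym Hab)) as Hdd.
  unfold seg_proj. set (dd := pdot (psub b a) (psub b a)) in *.
  set (w := pdot (psub p a) (psub b a)).
  pose proof (Rsqr_le_abs_1 _ _ (clamp01_nearest (w / dd) t Ht)) as Hsq.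
  set (c := clamp01 (w / dd)) in *. unfold Rsqr in Hsq.
  replace w with (w / dd * dd) by (field; lra). set (ws := w / dd) in *.
  assert (0 <= dd * ((t - ws) * (t - ws) - (c - ws) * (c - ws))) by (apply Rmult_le_pos; lra).
  nra.
Qed.

Lemma lipschitz_continuity_pt (h : R -> R) K : 0 <= K ->
  (forall s s', Rabs (h s - h s') <= K * Rabs (s - s')) -> forall s, continuity_pt h s.
Proof.
  intros HK Hlip s eps Heps. exists (eps / (K + 1)). split.
  - apply Rdiv_lt_0_compat; lra.
  - intros x [_ Hx]. simpl in *. unfold R_dist in *.
    apply Rle_lt_trans with (K * Rabs (x - s)); [apply Hlip|].
    apply Rle_lt_trans with (K * (eps / (K + 1))); [apply Rmult_le_compat_l; lra|].
    apply Rmult_lt_reg_r with (K + 1); [lra|]. field_simplify; [nra|lra].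
Qed.

(* Reduce to one variable: the distance from seg_pt a b s to the segment [c,d] is
   Lipschitz in s, so it attains its minimum on [0,1]. *)
Lemma seg_pair_dist_min a b c d : c <> d ->
  exists s0 t0, 0 <= s0 <= 1 /\ 0 <= t0 <= 1 /\
    forall s t, 0 <= s <= 1 -> 0 <= t <= 1 ->
      pdist (seg_pt a b s0) (seg_pt c d t0) <= pdist (seg_pt a b s) (seg_pt c d t).
Proof.
  intro Hcd.
  set (proj := fun s => seg_proj c d (seg_pt a b s)).
  set (h := fun s => pdist (seg_pt a b s) (seg_pt c d (proj s))).
  assert (Hh : forall s t, 0 <= t <= 1 -> h s <= pdist (seg_pt a b s) (seg_pt c d t))
    by (intros; apply seg_proj_min; auto).
  assert (Hproj : forall s, 0 <= proj s <= 1) by (intro; apply clamp01_range).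
  assert (Hlip : forall s s', h s - h s' <= pdist b a * Rabs (s - s')).
  { intros s s'. pose proof (Hh s (proj s') (Hproj s')).
    pose proof (pdist_triangle (seg_pt a b s) (seg_pt a b s') (seg_pt c d (proj s'))).
    rewrite pdist_seg_pt in *. unfold h at 2. nra. }
  assert (Hcont : forall s, continuity_pt h s).
  { apply (lipschitz_continuity_pt h (pdist b a)); [apply sqrt_pos|].
    intros s s'. apply Rabs_le. pose proof (Hlip s' s). rewrite Rabs_minus_sym in H.
    pose proof (Hlip s s'). lra. }
  destruct (continuity_ab_min h 0 1 ltac:(lra) (fun s _ => Hcont s)) as [s0 [Hmin Hs0]].
  exists s0, (proj s0). repeat split; try apply Hproj; try lra.
  intros s t Hs Ht. apply Rle_trans with (h s); [apply Hmin; lra|]. apply Hh; auto.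
Qed.

Lemma min_attained_on_list {A B : Type} (P : A -> Prop) (Q : B -> Prop) (f : A -> B -> R)
    (L : list A) :
  (forall a, P a -> exists b, Q b /\ forall b', Q b' -> f a b <= f a b') ->
  (exists a, In a L /\ P a) ->
  exists a0 b0, P a0 /\ Q b0 /\ forall a b, In a L -> P a -> Q b -> f a0 b0 <= f a b.
Proof.
  intros Hmin. induction L as [|a L IH]; intros [a' [Ha' Pa']]; [destruct Ha'|].
  destruct (classic (exists a, In a L /\ P a)) as [HL|HL].
  - destruct (IH HL) as [a1 [b1 [Pa1 [Qb1 Hm1]]]].
    destruct (classic (P a)) as [Pa|Pa].
    + destruct (Hmin a Pa) as [b [Qb Hb]].
      destruct (Rle_or_lt (f a1 b1) (f a b)) as [Hle|Hlt].
      * exists a1, b1. repeat split; auto. intros a2 b2 [<-|Hin] Pa2 Qb2; auto.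
        apply Rle_trans with (f a b); auto.
      * exists a, b. repeat split; auto. intros a2 b2 [<-|Hin] Pa2 Qb2; auto.
        apply Rle_trans with (f a1 b1); auto; lra.
    + exists a1, b1. repeat split; auto. intros a2 b2 [<-|Hin] Pa2 Qb2; [contradiction|auto].
  - assert (a' = a) as -> by (destruct Ha' as [->|Hin]; [auto|exfalso; eauto]).
    destruct (Hmin a Pa') as [b [Qb Hb]].
    exists a, b. repeat split; auto. intros a2 b2 [<-|Hin] Pa2 Qb2; [auto|exfalso; eauto].
Qed.

(** * Edges of the polygon *)

Lemma V_eq n v a b : (a mod n = b mod n)%nat -> V n v a = V n v b.
Proof. unfold V; intros ->; reflexivity. Qed.

Lemma V_mod n v a : V n v (a mod n) = V n v a.
Proof. apply V_eq, Nat.Div0.mod_mod. Qed.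

Lemma V_add_n n v a : V n v (a + n) = V n v a.
Proof. apply V_eq. rewrite <- (Nat.mul_1_l n) at 1. apply Nat.Div0.mod_add. Qed.

Lemma S_mod n k : (S k mod n = S (k mod n) mod n)%nat.
Proof.
  rewrite <- (Nat.add_1_r k), <- (Nat.add_1_r (k mod n)).
  symmetry; apply Nat.Div0.add_mod_idemp_l.
Qed.

Lemma S_mod_cases n r : (r < n)%nat ->
  (S r < n /\ S r mod n = S r)%nat \/ (S r = n /\ S r mod n = 0)%nat.
Proof.
  intro Hr. destruct (Nat.eq_dec (S r) n) as [<-|Hne].
  - right. split; [reflexivity|apply Nat.Div0.mod_same].
  - left. split; [lia|apply Nat.mod_small; lia].
Qed.

Lemma S_mod_inj n i j : (i < n)%nat -> (j < n)%nat -> (S i mod n = S j mod n)%nat -> i = j.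
Proof.
  intros Hi Hj H.
  destruct (S_mod_cases n i Hi) as [[Hi' Ei]|[Hi' Ei]], (S_mod_cases n j Hj) as [[Hj' Ej]|[Hj' Ej]];
    rewrite Ei, Ej in H; clear Ei Ej; lia.
Qed.

Lemma V_pred_S n v k : (0 < n)%nat -> V n v (S k mod n + n - 1) = V n v k.
Proof.
  intro Hn. apply V_eq.
  replace (S k mod n + n - 1)%nat with (S k mod n + (n - 1))%nat by lia.
  rewrite Nat.Div0.add_mod_idemp_l. replace (S k + (n - 1))%nat with (k + 1 * n)%nat by lia.
  apply Nat.Div0.mod_add.
Qed.

Lemma V_S_pred n v k : (0 < n)%nat -> V n v (S (k + n - 1)) = V n v k.
Proof. intro Hn. replace (S (k + n - 1)) with (k + n)%nat by lia. apply V_add_n. Qed.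

Definition edge_pt (n : nat) (v : nat -> pt) (i : nat) : R -> pt :=
  seg_pt (V n v i) (V n v (S i)).

Lemma edge_pt_mod n v k s : edge_pt n v (k mod n) s = edge_pt n v k s.
Proof. unfold edge_pt. rewrite V_mod, (V_eq n v (S (k mod n)) (S k)); [reflexivity|].
  now rewrite <- S_mod. Qed.

Lemma edge_len_mod n v k : edge_len n v (k mod n) = edge_len n v k.
Proof. unfold edge_len. rewrite V_mod, (V_eq n v (S (k mod n)) (S k)); [reflexivity|].
  now rewrite <- S_mod. Qed.

Definition nonadjacent (n i j : nat) : Prop :=
  (i < n)%nat /\ (j < n)%nat /\ i <> j /\ ~ adjacent n i j.

Lemma nonadjacent_sym n i j : nonadjacent n i j -> nonadjacent n j i.
Proof. unfold nonadjacent, adjacent. intros (Hi & Hj & Hij & Hadj). repeat split; auto; tauto. Qed.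

Lemma not_nonadjacent n i j : (i < n)%nat -> (j < n)%nat -> ~ nonadjacent n i j ->
  i = j \/ j = (S i mod n)%nat \/ i = (S j mod n)%nat.
Proof.
  unfold nonadjacent, adjacent. intros Hi Hj H.
  destruct (Nat.eq_dec i j); [auto|]. right. apply NNPP. tauto.
Qed.

Lemma knot_edge_nondeg n v m : polygonal_knot n v -> V n v (S m) <> V n v m.
Proof.
  intros [H3 [Hdist _]]. unfold V.
  assert (Hm : (m mod n < n)%nat) by (apply Nat.mod_upper_bound; lia).
  rewrite S_mod. set (r := (m mod n)%nat) in *. clearbody r.
  apply Hdist; [apply Nat.mod_upper_bound; lia|exact Hm|].
  destruct (S_mod_cases n r Hm) as [[_ ->]|[Hn ->]]; lia.
Qed.

Lemma nonadjacent_edges_disjoint n v i j p : polygonal_knot n v -> nonadjacent n i j ->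
  on_edge n v i p -> on_edge n v j p -> False.
Proof.
  intros [_ [_ Hmeet]] [Hi [Hj [Hij Hadj]]] Hpi Hpj. apply Hadj.
  destruct (Hmeet i j p Hi Hj Hij Hpi Hpj) as [[-> _]|[-> _]]; [left|right]; reflexivity.
Qed.

Lemma on_edge_pt n v i s : 0 <= s <= 1 -> on_edge n v i (edge_pt n v i s).
Proof. intro Hs. exists s. split; [exact Hs|reflexivity]. Qed.

Lemma closest_nonadjacent_points n v : polygonal_knot n v -> (exists i j, nonadjacent n i j) ->
  exists i0 j0 s0 t0, nonadjacent n i0 j0 /\ 0 <= s0 <= 1 /\ 0 <= t0 <= 1 /\
    forall i j s t, nonadjacent n i j -> 0 <= s <= 1 -> 0 <= t <= 1 ->
      pdist (edge_pt n v i0 s0) (edge_pt n v j0 t0) <= pdist (edge_pt n v i s) (edge_pt n v j t).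
Proof.
  intros Hk [i [j Hij]].
  set (unit_sq := fun st : R * R => 0 <= fst st <= 1 /\ 0 <= snd st <= 1).
  set (dist := fun (ij : nat * nat) (st : R * R) =>
    pdist (edge_pt n v (fst ij) (fst st)) (edge_pt n v (snd ij) (snd st))).
  assert (Hin : forall i j, nonadjacent n i j -> In (i, j) (list_prod (seq 0 n) (seq 0 n))).
  { intros i' j' [Hi [Hj _]]. apply in_prod; apply in_seq; lia. }
  assert (Hpair : forall ij, nonadjacent n (fst ij) (snd ij) ->
            exists st, unit_sq st /\ forall st', unit_sq st' -> dist ij st <= dist ij st').
  { intros [i' j'] _. simpl.
    destruct (seg_pair_dist_min (V n v i') (V n v (S i')) (V n v j') (V n v (S j')))
      as [s0 [t0 [Hs0 [Ht0 Hm]]]]; [apply not_eq_sym, knot_edge_nondeg, Hk|].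
    exists (s0, t0). split; [split; assumption|]. intros [s t] [Hs Ht]. apply Hm; assumption. }
  destruct (min_attained_on_list _ unit_sq dist (list_prod (seq 0 n) (seq 0 n)) Hpair)
    as [[i0 j0] [[s0 t0] [H0 [[Hs0 Ht0] Hmin]]]].
  { exists (i, j). split; [apply Hin|]; assumption. }
  exists i0, j0, s0, t0. refine (conj H0 (conj Hs0 (conj Ht0 _))).
  intros i' j' s t Hij' Hs Ht. apply (Hmin (i', j') (s, t)); [apply Hin| |split]; assumption.
Qed.

(** * Turning points *)

Lemma gamma_shift n v m s : 0 <= s < 1 -> gamma n v (INR m + s) = edge_pt n v m s.
Proof.
  intro Hs. unfold gamma.
  assert (Hk : Int_part (INR m + s) = Z.of_nat m)
    by (symmetry; apply Int_part_spec; rewrite <- INR_IZR_INZ; lra).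
  rewrite Hk, <- Nat2Z.inj_mod, Nat2Z.id, <- INR_IZR_INZ.
  replace (INR m + s - INR m) with s by ring.
  rewrite <- (edge_pt_mod n v m s). reflexivity.
Qed.

Lemma gamma_edge n v m u : INR m <= u <= INR m + 1 -> gamma n v u = edge_pt n v m (u - INR m).
Proof.
  intro Hu. destruct (Rlt_or_le u (INR m + 1)) as [Hlt|Hge].
  - replace u with (INR m + (u - INR m)) at 1 by ring. apply gamma_shift; lra.
  - replace u with (INR (S m) + 0) by (rewrite S_INR; lra).
    rewrite gamma_shift by lra. rewrite S_INR. replace (INR m + 1 + 0 - INR m) with 1 by ring.
    unfold edge_pt. rewrite seg_pt_0, seg_pt_1. reflexivity.
Qed.

Lemma quadratic_min_strict_mono al be ga lo t hi : 0 < ga -> lo <= t <= hi ->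
  (forall u, lo <= u <= hi -> al + be * t + ga * (t * t) <= al + be * u + ga * (u * u)) ->
  (forall a b, lo <= a -> a < b -> b <= t ->
     al + be * b + ga * (b * b) < al + be * a + ga * (a * a)) /\
  (forall a b, t <= a -> a < b -> b <= hi ->
     al + be * a + ga * (a * a) < al + be * b + ga * (b * b)).
Proof.
  intros Hga Ht Hmin.
  assert (Hdiff : forall a b, al + be * b + ga * (b * b) - (al + be * a + ga * (a * a))
                              = (b - a) * (be + ga * (a + b))) by (intros; ring).
  split; intros a b Ha Hab Hb.
  - pose proof (Hmin ((a + t) / 2) ltac:(lra)) as Hm. pose proof (Hdiff ((a + t) / 2) t).
    assert (Hslope : be + ga * ((a + t) / 2 + t) <= 0).
    { destruct (Rle_or_lt (be + ga * ((a + t) / 2 + t)) 0) as [Hs|Hs]; [exact Hs|nra]. }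
    assert (ga * (a + b) < ga * ((a + t) / 2 + t)) by (apply Rmult_lt_compat_l; lra).
    assert (0 < (b - a) * - (be + ga * (a + b))) by (apply Rmult_lt_0_compat; lra).
    pose proof (Hdiff a b). lra.
  - pose proof (Hmin ((b + t) / 2) ltac:(lra)) as Hm. pose proof (Hdiff t ((b + t) / 2)).
    assert (Hslope : 0 <= be + ga * (t + (b + t) / 2)).
    { destruct (Rle_or_lt 0 (be + ga * (t + (b + t) / 2))) as [Hs|Hs]; [exact Hs|nra]. }
    assert (ga * (t + (b + t) / 2) < ga * (a + b)) by (apply Rmult_lt_compat_l; lra).
    assert (0 < (b - a) * (be + ga * (a + b))) by (apply Rmult_lt_0_compat; lra).
    pose proof (Hdiff a b). lra.
Qed.

(* On one edge the squared distance to c is a quadratic in the parameter with leading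
   coefficient |v_(m+1) - v_m|^2 > 0. *)
Lemma gamma_dist_strict_mono n v c m lo t hi : polygonal_knot n v ->
  INR m <= lo -> lo <= t <= hi -> hi <= INR m + 1 ->
  (forall u, lo <= u <= hi -> pdist c (gamma n v t) <= pdist c (gamma n v u)) ->
  (forall a b, lo <= a -> a < b -> b <= t -> pdist c (gamma n v b) < pdist c (gamma n v a)) /\
  (forall a b, t <= a -> a < b -> b <= hi -> pdist c (gamma n v a) < pdist c (gamma n v b)).
Proof.
  intros Hk Hlo Ht Hhi Hmin.
  set (P := psub c (V n v m)). set (D := psub (V n v (S m)) (V n v m)).
  set (Q := fun u => pdot P P - 2 * (u - INR m) * pdot P D + (u - INR m) * (u - INR m) * pdot D D).
  assert (HQ : forall u, lo <= u <= hi -> pdist c (gamma n v u) = sqrt (Q u)).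
  { intros u Hu. rewrite (gamma_edge n v m u) by lra.
    unfold pdist, pnorm, edge_pt. rewrite seg_dist_sq. reflexivity. }
  assert (HQ0 : forall u, 0 <= Q u).
  { intro u. unfold Q, P, D. rewrite <- seg_dist_sq. apply pdot_self_nonneg. }
  set (al := pdot P P + 2 * INR m * pdot P D + INR m * INR m * pdot D D).
  set (be := -2 * pdot P D - 2 * INR m * pdot D D).
  assert (HQq : forall u, Q u = al + be * u + pdot D D * (u * u))
    by (intro; unfold Q, al, be; ring).
  destruct (quadratic_min_strict_mono al be (pdot D D) lo t hi) as [Hdec Hinc].
  - apply pdot_sub_self_pos, knot_edge_nondeg, Hk.
  - exact Ht.
  - intros u Hu. rewrite <- !HQq. apply sqrt_le_0; [apply HQ0|apply HQ0|].
    rewrite <- !HQ by lra. apply Hmin, Hu.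
  - split; intros a b Ha Hab Hb; rewrite !HQ by lra; apply sqrt_lt_1; try apply HQ0;
      rewrite !HQq; [apply Hdec|apply Hinc]; assumption.
Qed.

Lemma turning_of_local_min n v c t eps mL mR : polygonal_knot n v -> 0 < eps ->
  INR mL <= t - eps -> t <= INR mL + 1 -> INR mR <= t -> t + eps <= INR mR + 1 ->
  (forall u, t - eps <= u <= t + eps -> pdist c (gamma n v t) <= pdist c (gamma n v u)) ->
  turning_param n v c t.
Proof.
  intros Hk Heps HL1 HL2 HR1 HR2 Hmin. exists eps. split; [exact Heps|]. right. split.
  - refine (proj1 (gamma_dist_strict_mono n v c mL (t - eps) t t Hk _ _ _ _)); try lra.
    intros u Hu; apply Hmin; lra.
  - refine (proj2 (gamma_dist_strict_mono n v c mR t t (t + eps) Hk _ _ _ _)); try lra.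
    intros u Hu; apply Hmin; lra.
Qed.

Lemma interior_turning n v i s y : polygonal_knot n v -> 0 < s < 1 ->
  (forall s', 0 <= s' <= 1 -> pdist y (edge_pt n v i s) <= pdist y (edge_pt n v i s')) ->
  turning_pt n v y (edge_pt n v i s).
Proof.
  intros Hk Hs Hmin. set (eps := Rmin s (1 - s)).
  assert (Heps : 0 < eps <= s /\ eps <= 1 - s) by (unfold eps, Rmin; destruct Rle_dec; lra).
  exists (INR i + s). split.
  - rewrite (gamma_edge n v i) by lra. f_equal; ring.
  - apply (turning_of_local_min n v y _ eps i i Hk); try lra.
    intros u Hu. rewrite !(gamma_edge n v i) by lra.
    replace (INR i + s - INR i) with s by ring. apply Hmin. lra.
Qed.

Lemma vertex_turning n v m y : polygonal_knot n v ->
  (forall s, 0 <= s <= 1 -> pdist y (V n v (S m)) <= pdist y (edge_pt n v m s)) ->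
  (forall s, 0 <= s <= 1 -> pdist y (V n v (S m)) <= pdist y (edge_pt n v (S m) s)) ->
  turning_pt n v y (V n v (S m)).
Proof.
  intros Hk Hprev Hnext. pose proof (S_INR m) as HSm.
  assert (Hv : gamma n v (INR (S m)) = V n v (S m)).
  { rewrite (gamma_edge n v m) by lra. replace (INR (S m) - INR m) with 1 by lra.
    apply seg_pt_1. }
  exists (INR (S m)). split; [symmetry; exact Hv|].
  apply (turning_of_local_min n v y _ 1 m (S m) Hk); try lra.
  intros u Hu. rewrite Hv. destruct (Rle_or_lt u (INR (S m))) as [Hle|Hlt].
  - rewrite (gamma_edge n v m) by lra. apply Hprev. lra.
  - rewrite (gamma_edge n v (S m)) by lra. apply Hnext. lra.
Qed.

(** * Estimates at a vertex *)

Lemma half_angle_bound L X c : 0 <= L -> 0 <= X -> -1 <= c < 1 ->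
  L * L * (1 + c) <= X * X * (1 - c) ->
  acos c <> 0 /\ 2 * (L / (2 * tan (acos c / 2))) <= X.
Proof.
  intros HL HX Hc Hq. pose proof (acos_bound c) as Hb. pose proof PI_RGT_0.
  assert (Hcos : cos (acos c) = c) by (apply cos_acos; lra).
  assert (Hne : acos c <> 0) by (intro E; rewrite E, cos_0 in Hcos; lra).
  split; [exact Hne|].
  set (h := acos c / 2).
  assert (Hsin : 0 < sin h) by (apply sin_gt_0; unfold h; lra).
  assert (Hcosh : 0 <= cos h) by (apply cos_ge_0; unfold h; lra).
  assert (Hh : acos c = 2 * h) by (unfold h; field).
  assert (Hc2 : 1 + c = 2 * (cos h * cos h)) by (rewrite <- Hcos, Hh, cos_2a_cos; ring).
  assert (Hs2 : 1 - c = 2 * (sin h * sin h)) by (rewrite <- Hcos, Hh, cos_2a_sin; ring).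
  rewrite Hc2, Hs2 in Hq. unfold tan.
  destruct (Req_dec (cos h) 0) as [Hz|Hz].
  - (* then tan h = sin h / 0 = 0 in Rocq, and the left-hand side is L / 0 = 0 *)
    rewrite Hz. unfold Rdiv. rewrite Rinv_0, Rmult_0_r, Rmult_0_r, Rinv_0, Rmult_0_r, Rmult_0_r.
    exact HX.
  - replace (2 * (L / (2 * (sin h / cos h)))) with (L * cos h / sin h) by (field; lra).
    apply Rmult_le_reg_r with (sin h); [exact Hsin|].
    replace (L * cos h / sin h * sin h) with (L * cos h) by (field; lra).
    apply Rsqr_incr_0_var; [unfold Rsqr; nra|apply Rmult_le_pos; lra].
Qed.

(* Write c for the cosine of the turning angle between a and b, so that
   |a + tau b|^2 = (tau |b| + c |a|)^2 + |a|^2 (1 - c^2).  For c >= 0 this is at least |a|^2;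
   for c < 0 the second term alone gives the half-angle bound, since (1 - c)^2 >= 1. *)
Lemma turn_bound_scalar la lb ab X tau : 0 < la -> 0 < lb -> Rabs ab <= la * lb ->
  0 <= tau <= 1 -> 0 <= X -> X * X = la * la + 2 * tau * ab + tau * tau * (lb * lb) ->
  Rmin la lb <= X \/
  (acos (ab / (la * lb)) <> 0 /\ 2 * (Rmin la lb / (2 * tan (acos (ab / (la * lb)) / 2))) <= X).
Proof.
  intros Ha Hb Hab Htau HX HXX.
  set (c := ab / (la * lb)).
  assert (Hc : ab = c * (la * lb)) by (unfold c; field; lra).
  assert (Hcb : -1 <= c <= 1).
  { rewrite Hc, Rabs_mult, (Rabs_pos_eq (la * lb)) in Hab by nra.
    apply Rabs_le_between. apply Rmult_le_reg_r with (la * lb); nra. }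
  assert (Hmin : 0 <= Rmin la lb <= la) by (unfold Rmin; destruct Rle_dec; lra).
  destruct (Rle_or_lt 0 c) as [Hc0|Hc0].
  - left. apply Rle_trans with la; [apply Rmin_l|].
    apply Rsqr_incr_0_var; [|exact HX]. unfold Rsqr. rewrite HXX, Hc.
    assert (0 <= tau * c * (la * lb)) by (apply Rmult_le_pos; [apply Rmult_le_pos|]; nra).
    nra.
  - right. apply half_angle_bound; try lra.
    assert (Hperp : la * la * (1 - c * c) <= X * X).
    { rewrite HXX, Hc. pose proof (Rle_0_sqr (tau * lb + c * la)). unfold Rsqr in *. nra. }
    assert (Hstep1 : Rmin la lb * Rmin la lb * (1 + c) <= la * la * (1 + c))
      by (apply Rmult_le_compat_r; nra).
    assert (Hstep2 : la * la * (1 + c) <= la * la * (1 - c * c) * (1 - c)).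
    { assert (0 <= la * la * (1 + c) * (c * c - 2 * c)) by (apply Rmult_le_pos; nra). nra. }
    assert (Hstep3 : la * la * (1 - c * c) * (1 - c) <= X * X * (1 - c))
      by (apply Rmult_le_compat_r; lra).
    lra.
Qed.

Lemma turn_bound a b tau : 0 < pdot a a -> 0 < pdot b b -> 0 <= tau <= 1 ->
  Rmin (pnorm a) (pnorm b) <= pnorm (padd a (pscal tau b)) \/
  (acos (pdot a b / (pnorm a * pnorm b)) <> 0 /\
   2 * (Rmin (pnorm a) (pnorm b) / (2 * tan (acos (pdot a b / (pnorm a * pnorm b)) / 2)))
     <= pnorm (padd a (pscal tau b))).
Proof.
  intros Ha Hb Htau. apply (turn_bound_scalar _ _ _ _ tau); try assumption.
  - apply sqrt_lt_R0, Ha.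
  - apply sqrt_lt_R0, Hb.
  - apply pdot_abs_le.
  - apply pnorm_nonneg.
  - rewrite !pnorm_sq. destruct_pt a; destruct_pt b; simpl; ring.
Qed.

Definition thick_bound (n : nat) (v : nat -> pt) : Rbar :=
  Rbar_min (Rbar_mult 2 (ThickR n v)) (Finite (MinEdge n v)).

Lemma Rbar_mult_le_Finite k T r : 0 < k -> Rbar_le T (Finite r) ->
  Rbar_le (Rbar_mult k T) (Finite (k * r)).
Proof.
  intros Hk H. destruct T as [t| |]; simpl in H.
  - simpl. nra.
  - destruct H.
  - unfold Rbar_mult, Rbar_mult'. destruct (Rle_dec 0 k) as [H0|H0]; [|lra].
    destruct (Rle_lt_or_eq_dec 0 k H0); [exact I|lra].
Qed.

Lemma thick_bound_le_MinEdge n v X : MinEdge n v <= X -> Rbar_le (thick_bound n v) (Finite X).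
Proof. intro H. eapply Rbar_le_trans; [apply Rbar_min_r|exact H]. Qed.

Lemma thick_bound_le_ThickR n v r X : Rbar_le (ThickR n v) (Finite r) -> 2 * r <= X ->
  Rbar_le (thick_bound n v) (Finite X).
Proof.
  intros H HX. eapply Rbar_le_trans; [apply Rbar_min_l|].
  eapply Rbar_le_trans; [apply (Rbar_mult_le_Finite 2 _ r); [lra|exact H]|exact HX].
Qed.

Lemma thick_bound_le_dcsd n v X : Rbar_le (dcsd n v) (Finite X) ->
  Rbar_le (thick_bound n v) (Finite X).
Proof.
  intro H. apply (thick_bound_le_ThickR n v (/ 2 * X)); [|lra].
  eapply Rbar_le_trans; [apply Rbar_min_r|]. apply Rbar_mult_le_Finite; [lra|exact H].
Qed.

Lemma min_list_le l d x : In x l -> min_list l d <= x.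
Proof.
  induction l as [|a l IH]; [intros []|]. intros [->|H]; destruct l as [|b l].
  - apply Rle_refl.
  - apply Rmin_l.
  - destruct H.
  - eapply Rle_trans; [apply Rmin_r|]. apply IH, H.
Qed.

Lemma MinEdge_le_edge_len n v k : (0 < n)%nat -> MinEdge n v <= edge_len n v k.
Proof.
  intro Hn. rewrite <- edge_len_mod. apply min_list_le, in_map, in_seq.
  pose proof (Nat.mod_upper_bound k n). lia.
Qed.

Lemma MinRad_le_Rad n v k : (k < n)%nat -> Rbar_le (MinRad n v) (Rad n v k).
Proof.
  intro Hk. unfold MinRad. assert (Hin : In k (seq 0 n)) by (apply in_seq; lia).
  induction (seq 0 n) as [|a l IH]; [destruct Hin|]. destruct Hin as [->|Hin].
  - apply Rbar_min_l.
  - eapply Rbar_le_trans; [apply Rbar_min_r|apply IH, Hin].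
Qed.

Lemma vertex_bound n v m tau X : polygonal_knot n v -> (m < n)%nat -> 0 <= tau <= 1 ->
  let a := psub (V n v m) (V n v (m + n - 1)) in
  let b := psub (V n v (S m)) (V n v m) in
  X = pnorm (padd a (pscal tau b)) \/ X = pnorm (padd b (pscal tau a)) ->
  Rbar_le (thick_bound n v) (Finite X).
Proof.
  intros Hk Hm Htau a b HX. assert (Hn : (0 < n)%nat) by (destruct Hk; lia).
  assert (Hprev : V n v (S (m + n - 1)) = V n v m) by (apply V_S_pred, Hn).
  assert (Ha : 0 < pdot a a)
    by (apply pdot_sub_self_pos; rewrite <- Hprev; apply knot_edge_nondeg, Hk).
  assert (Hb : 0 < pdot b b) by (apply pdot_sub_self_pos, knot_edge_nondeg, Hk).
  assert (Hturn : Rmin (pnorm a) (pnorm b) <= X \/ (turn_angle n v m <> 0 /\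
    2 * (Rmin (pnorm a) (pnorm b) / (2 * tan (turn_angle n v m / 2))) <= X)).
  { destruct HX as [->| ->]; [apply turn_bound; assumption|].
    unfold turn_angle; fold a b. rewrite pdot_comm, Rmult_comm, Rmin_comm.
    apply turn_bound; assumption. }
  destruct Hturn as [Hedge|[Hne Hrad]].
  - apply thick_bound_le_MinEdge. eapply Rle_trans; [|exact Hedge]. apply Rmin_glb.
    + pose proof (MinEdge_le_edge_len n v (m + n - 1) Hn) as H.
      unfold edge_len in H. rewrite Hprev in H. exact H.
    + apply MinEdge_le_edge_len, Hn.
  - eapply thick_bound_le_ThickR; [|exact Hrad].
    eapply Rbar_le_trans; [apply Rbar_min_l|].
    eapply Rbar_le_trans; [apply MinRad_le_Rad, Hm|].
    unfold Rad. destruct Req_EM_T as [E|_]; [contradiction|].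
    unfold edge_len at 1. rewrite Hprev. apply Rle_refl.
Qed.

Lemma prev_vertex_bound n v j y : polygonal_knot n v -> (j < n)%nat -> on_edge n v j y ->
  Rbar_le (thick_bound n v) (Finite (pdist (V n v (j + n - 1)) y)).
Proof.
  intros Hk Hj [tau [Htau ->]]. apply (vertex_bound n v j tau); [exact Hk|exact Hj|exact Htau|].
  left. rewrite pdist_sym. unfold pdist. f_equal.
  destruct_pt (V n v j); destruct_pt (V n v (j + n - 1)); destruct_pt (V n v (S j)).
  simpl. apply pt_eq; ring.
Qed.

Lemma next_vertex_bound n v j y : polygonal_knot n v -> on_edge n v j y ->
  Rbar_le (thick_bound n v) (Finite (pdist (V n v (S (S j))) y)).
Proof.
  intros Hk [tau [Htau ->]]. assert (Hn : (0 < n)%nat) by (destruct Hk; lia).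
  apply (vertex_bound n v (S j mod n) (1 - tau)); [exact Hk|apply Nat.mod_upper_bound; lia|lra|].
  right. rewrite V_mod, V_pred_S by exact Hn.
  rewrite (V_eq n v (S (S j mod n)) (S (S j))) by (symmetry; apply S_mod).
  unfold pdist. f_equal.
  destruct_pt (V n v j); destruct_pt (V n v (S j)); destruct_pt (V n v (S (S j))).
  simpl. apply pt_eq; ring.
Qed.

(** * Closest pairs *)

Lemma vertex_turning_or_bound n v m j y : polygonal_knot n v -> (j < n)%nat -> on_edge n v j y ->
  nonadjacent n (m mod n) j \/ nonadjacent n (S m mod n) j ->
  (forall k s, nonadjacent n k j -> 0 <= s <= 1 ->
     pdist y (V n v (S m)) <= pdist y (edge_pt n v k s)) ->
  turning_pt n v y (V n v (S m)) \/ Rbar_le (thick_bound n v) (Finite (pdist (V n v (S m)) y)).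
Proof.
  intros Hk Hj Hy Hgood Hmin. assert (Hn : (0 < n)%nat) by (destruct Hk; lia).
  (* e_a and e_b are the edges ending and starting at the vertex V n v (S m). *)
  set (a := (m mod n)%nat) in *. set (b := (S m mod n)%nat) in *.
  assert (Ha : (a < n)%nat) by (apply Nat.mod_upper_bound; lia).
  assert (Hb : (b < n)%nat) by (apply Nat.mod_upper_bound; lia).
  assert (Hab : b = (S a mod n)%nat) by apply S_mod.
  assert (Hxa : V n v (S m) = edge_pt n v a 1)
    by (unfold a; rewrite edge_pt_mod; symmetry; apply seg_pt_1).
  assert (Hxb : V n v (S m) = edge_pt n v b 0)
    by (unfold b, edge_pt; rewrite seg_pt_0, V_mod; reflexivity).
  destruct (classic (nonadjacent n a j)) as [Ga|Ga], (classic (nonadjacent n b j)) as [Gb|Gb].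
  - left. apply vertex_turning; [exact Hk| |]; intros s Hs.
    + rewrite <- (edge_pt_mod n v m). apply Hmin; assumption.
    + rewrite <- (edge_pt_mod n v (S m)). apply Hmin; assumption.
  - right. destruct (not_nonadjacent n b j Hb Hj Gb) as [Ebj|[Ej|Eb]].
    + exfalso. apply (nonadjacent_edges_disjoint n v a j (V n v (S m)) Hk Ga).
      * rewrite Hxa. apply on_edge_pt. lra.
      * rewrite Hxb, Ebj. apply on_edge_pt. lra.
    + replace (V n v (S m)) with (V n v (j + n - 1)).
      * apply prev_vertex_bound; assumption.
      * rewrite Ej, V_pred_S by exact Hn. apply V_mod.
    + exfalso. destruct Ga as [_ [_ [Hne _]]]. apply Hne, (S_mod_inj n); congruence.
  - right. destruct (not_nonadjacent n a j Ha Hj Ga) as [Eaj|[Ej|Ea]].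
    + exfalso. apply (nonadjacent_edges_disjoint n v b j (V n v (S m)) Hk Gb).
      * rewrite Hxb. apply on_edge_pt. lra.
      * rewrite Hxa, Eaj. apply on_edge_pt. lra.
    + exfalso. destruct Gb as [_ [_ [Hne _]]]. congruence.
    + replace (V n v (S m)) with (V n v (S (S j))).
      * apply next_vertex_bound; assumption.
      * apply V_eq. rewrite (S_mod n m), (S_mod n (S j)). fold a. rewrite Ea. reflexivity.
  - exfalso. tauto.
Qed.

Lemma closest_point_turning_or_bound n v i j s y : polygonal_knot n v -> nonadjacent n i j ->
  0 <= s <= 1 -> on_edge n v j y ->
  (forall k s', nonadjacent n k j -> 0 <= s' <= 1 ->
     pdist y (edge_pt n v i s) <= pdist y (edge_pt n v k s')) ->
  turning_pt n v y (edge_pt n v i s) \/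
  Rbar_le (thick_bound n v) (Finite (pdist (edge_pt n v i s) y)).
Proof.
  intros Hk Hij Hs Hy Hmin. assert (Hn : (0 < n)%nat) by (destruct Hk; lia).
  pose proof Hij as [Hi [Hj _]].
  destruct (Req_dec s 1) as [->|H1]; [|destruct (Req_dec s 0) as [->|H0]].
  - assert (Hx : edge_pt n v i 1 = V n v (S i)) by apply seg_pt_1. rewrite Hx in *.
    apply (vertex_turning_or_bound n v i j y Hk Hj Hy); [|exact Hmin].
    left. rewrite Nat.mod_small; assumption.
  - assert (Hx : edge_pt n v i 0 = V n v (S (i + n - 1)))
      by (unfold edge_pt; rewrite seg_pt_0, V_S_pred; [reflexivity|exact Hn]).
    rewrite Hx in *.
    apply (vertex_turning_or_bound n v (i + n - 1) j y Hk Hj Hy); [|exact Hmin].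
    right. replace (S (i + n - 1)) with (i + 1 * n)%nat by lia.
    rewrite Nat.Div0.mod_add, Nat.mod_small; assumption.
  - left. apply interior_turning; [exact Hk|lra|]. intros s' Hs'. apply Hmin; assumption.
Qed.

Theorem corollary3p7 (n : nat) (v : nat -> pt) :
  polygonal_knot n v ->
  Rbar_le (Rbar_min (Rbar_mult 2 (ThickR n v)) (Finite (MinEdge n v))) (MD n v).
Proof.
  intros Hk. fold (thick_bound n v). unfold MD.
  match goal with |- Rbar_le _ (Glb_Rbar ?S) => apply (proj2 (Glb_Rbar_correct S)) end.
  intros d (i & j & p & q & Hi & Hj & Hij & Hadj & (s & Hs & ->) & (t & Ht & ->) & ->).
  destruct (closest_nonadjacent_points n v Hk) as (i0 & j0 & s0 & t0 & H0 & Hs0 & Ht0 & Hmin).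
  { exists i, j. repeat split; assumption. }
  apply Rbar_le_trans with (Finite (pdist (edge_pt n v i0 s0) (edge_pt n v j0 t0))).
  2: { apply (Hmin i j s t); [repeat split| |]; assumption. }
  set (x := edge_pt n v i0 s0). set (y := edge_pt n v j0 t0).
  destruct (closest_point_turning_or_bound n v i0 j0 s0 y Hk H0 Hs0 (on_edge_pt n v j0 t0 Ht0))
    as [Tx|Bx]; [intros k s' Hk' Hs'; rewrite !(pdist_sym y); apply Hmin; assumption| |exact Bx].
  destruct (closest_point_turning_or_bound n v j0 i0 t0 x Hk (nonadjacent_sym _ _ _ H0) Ht0
              (on_edge_pt n v i0 s0 Hs0)) as [Ty|By];
    [intros k t' Hk' Ht'; apply Hmin; [apply nonadjacent_sym| |]; assumption| |
     rewrite pdist_sym; exact By].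
  apply thick_bound_le_dcsd. unfold dcsd.
  match goal with |- Rbar_le (Glb_Rbar ?S) _ => apply (proj1 (Glb_Rbar_correct S)) end.
  exists x, y. repeat split; [|exact Tx|exact Ty].
  intro Exy. apply (nonadjacent_edges_disjoint n v i0 j0 x Hk H0);
    [apply on_edge_pt, Hs0|rewrite Exy; apply on_edge_pt, Ht0].
Qed.
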